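(* The cone $\Omega$ has dimension $15$, the maximal possible (equal to $\operatorname{rank}A$).
   Context: Kummer surface. Let $C$ be a very general smooth projective curve of genus 2, $J(C)$ its Jacobian, and $S$ the minimal resolution of the Kummer quartic $J(C)/\{\pm1\}\subset\mathbb{P}^3$; $S$ is a K3 surface of Picard number 17 and $NS(S)=\mathrm{Pic}(S)$. The group $J(C)_2$ is indexed as $\{0\}\cup\{ij:1\le i<j\le 6\}$ (unordered pairs, also $0=66$), with $0$ the identity, $ij+jk=ik$, and $ij+kl=mn$ whenever $\{i,j,k,l,m,n\}=\{1,\dots,6\}$. For $\alpha\in J(C)_2$, $N_\alpha$ is the exceptional $(-2)$-curve over the node indexed by $\alpha$ and $T_\alpha$ is the trope indexed by $\alpha$ (a smooth rational $(-2)$-curve). Each $T_\beta$ meets exactly the six $N_\alpha$ with $\alpha\in I(T_\beta)$, where $I(T_0)=\{0,16,26,36,46,56\}$, $I(T_{i6})=\{0,i6,ij,ik,il,im\}$, $I(T_{ij})=\{i6,j6,ij,kl,km,lm\}$ for $\{i,j,k,l,m\}=\{1,\dots,5\}$. $\Lambda$ is the pullback of the hyperplane class; $\Lambda^2=4$, $N_\alpha^2=-2$, $\Lambda\cdot N_\alpha=0$, $N_\alpha\cdot N_\beta=0$ for $\alpha\neq\beta$, and $T_\beta=\tfrac12(\Lambda-\sum_{\alpha\in I(T_\beta)}N_\alpha)$. The switch $\sigma$ is the involution of $S$ with $N_\alpha\leftrightarrow T_\alpha$, $\Lambda\mapsto3\Lambda-\sum_\alpha N_\alpha$. A Göpel tetrad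 is a 4-element subset $g\subset J(C)_2$ no three elements of which lie in a common $I(T_\beta)$. A Weber hexad is a 6-element subset $w\subset J(C)_2$ no four elements of which lie in a common $I(T_\beta)$ or a common Göpel tetrad. $r_g:=\Lambda-\sum_{\alpha\in g}N_\alpha$, $r_w:=3\Lambda-2\sum_{\alpha\in w}N_\alpha$. Lattices. $R:=T_0$; $b:=\tfrac12\big(3\Lambda-\sum_{i=1}^6N_{i6}-2\sum_{1\le i<j\le5}N_{ij}\big)$; $B:=\mathbb{Z}b+\mathbb{Z}R$; $A:=B^\perp\subset NS(S)$ (rank 15). Domain: $P(S)$ is the component of $\{x^2>0\}$ in $NS(S)\otimes\mathbb{R}$ containing ample classes; $D':=\{x\in P(S): x\cdot r>0$ for all $r$ among $N_\alpha,T_\alpha,\Lambda-2N_\alpha,\sigma(\Lambda-2N_\alpha)$ ($\alpha\in J(C)_2$), $r_g$ (all 60 Göpel tetrads), $r_w$ (all 192 Weber hexads)$\}$; $\Omega:=\overline{D'}\cap(A\otimes\mathbb{R})$. *)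

From HB Require Import structures.
From mathcomp Require Import all_boot all_order all_algebra.
From mathcomp Require Import reals.
Set Implicit Arguments. Unset Strict Implicit. Unset Printing Implicit Defensive.
Import Order.TTheory GRing.Theory Num.Theory.
Local Open Scope ring_scope.

(* ---------- Indexing of J(C)_2 ----------
   J(C)_2 = 'I_16.  Element k has label [lab k] : nat * nat:
   0 ↦ (6,6) (the identity, "0 = 66"), and the 15 pairs ij (i<j) in
   lexicographic order. *)
Definition J2 := 'I_16.

Definition pairs : seq (nat * nat) :=
  [:: (6,6); (1,2); (1,3); (1,4); (1,5); (1,6); (2,3); (2,4); (2,5); (2,6);
      (3,4); (3,5); (3,6); (4,5); (4,6); (5,6)]%N.

Definition lab (a : J2) : nat * nat := nth (6,6)%N pairs a.

(* alpha ∈ I(T_beta) *)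
Definition inI (be al : J2) : bool :=
  let: (i, j) := lab be in
  let: (a, b) := lab al in
  if (i == 6)%N then (b == 6)%N
  else if (j == 6)%N then (a == 6)%N || (a == i) || (b == i)
  else ((b == 6)%N && ((a == i) || (a == j)))
       || ((b <= 5)%N && (((a == i) && (b == j)) ||
             [&& a != i, a != j, b != i & b != j])).

Definition Iset (be : J2) : {set J2} := [set al | inI be al].

Definition gopel (g : {set J2}) : bool :=
  (#|g| == 4)%N && [forall be : J2, #|g :&: Iset be| <= 2]%N.

Definition weber (w : {set J2}) : bool :=
  [&& (#|w| == 6)%N, [forall be : J2, #|w :&: Iset be| <= 3]%N
    & [forall g : {set J2}, gopel g ==> (#|w :&: g| <= 3)%N]].

(* ---------- NS(S) ⊗ R = R^17 ----------
   coordinate 0 : Λ ;  coordinate (lift ord0 a) : N_a. *)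
Section NS.
Variable R : realType.
Definition vec := 'rV[R]_17.

Definition Lam : vec := delta_mx 0 ord0.
Definition Nv (a : J2) : vec := delta_mx 0 (lift ord0 a).

Definition form (x y : vec) : R :=
  4 * (x 0 ord0 * y 0 ord0)
  - 2 * \sum_(a : J2) x 0 (lift ord0 a) * y 0 (lift ord0 a).

Definition Tv (be : J2) : vec := 2^-1 *: (Lam - \sum_(a in Iset be) Nv a).

Definition sigma (x : vec) : vec :=
  x 0 ord0 *: (3%:R *: Lam - \sum_(a : J2) Nv a)
  + \sum_(a : J2) x 0 (lift ord0 a) *: Tv a.

Definition r_g (g : {set J2}) : vec := Lam - \sum_(a in g) Nv a.
Definition r_w (w : {set J2}) : vec := 3%:R *: Lam - 2%:R *: \sum_(a in w) Nv a.

Definition root_vec (r : vec) : Prop :=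
  (exists a, r = Nv a) \/ (exists a, r = Tv a) \/
  (exists a, r = Lam - 2%:R *: Nv a) \/
  (exists a, r = sigma (Lam - 2%:R *: Nv a)) \/
  (exists g, gopel g /\ r = r_g g) \/
  (exists w, weber w /\ r = r_w w).

(* positive cone component containing the ample classes
   (Λ is nef and big, so this is the component with x·Λ > 0) *)
Definition Pcone (x : vec) : Prop := 0 < form x x /\ 0 < form x Lam.

Definition Dprime (x : vec) : Prop :=
  Pcone x /\ forall r, root_vec r -> 0 < form x r.

Definition closure17 (D : vec -> Prop) (x : vec) : Prop :=
  forall e : R, 0 < e -> exists y, D y /\ forall k, `|x 0 k - y 0 k| < e.

(* R = T_0, b, and A ⊗ R = B^⊥ ⊂ NS(S) ⊗ R *)
Definition Rv : vec := Tv ord0.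
Definition bv : vec :=
  2^-1 *: (3%:R *: Lam - \sum_(a : J2 | (lab a).2 == 6%N) Nv a
           - 2%:R *: \sum_(a : J2 | (lab a).2 != 6%N) Nv a).

Definition AR (x : vec) : Prop := form x bv = 0 /\ form x Rv = 0.

Definition Omega (x : vec) : Prop := closure17 Dprime x /\ AR x.

Definition span_dim (S : vec -> Prop) (d : nat) : Prop :=
  (exists M : 'M[R]_(d, 17), (forall i, S (row i M)) /\ \rank M = d) /\
  (forall n (M : 'M[R]_(n, 17)), (forall i, S (row i M)) -> (\rank M <= d)%N).
End NS.

From Pilot Require Import Defs.
From HB Require Import structures.
From mathcomp Require Import all_boot all_order all_algebra.
From mathcomp Require Import reals.
From mathcomp Require Import ring lra zify.
Set Implicit Arguments. Unset Strict Implicit. Unset Printing Implicit Defensive.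
Import Order.TTheory GRing.Theory Num.Theory.
Local Open Scope ring_scope.

(* Upper bound: the intersection form is nondegenerate and [b], [R] are
   independent, so [A = <b, R>^perp] has rank 15.
   Lower bound: write [x = t Lam - sum_a c_a N_a].  Every root defining [D']
   other than [N_a] pairs with [x] to a multiple of [t] minus a weighted sum of
   a few [c_a], and [x^2 = 4 t^2 - 2 sum c_a^2]; so [0 < c_a <= 11], [c_a <= 7]
   off [I(T_0)] and [t = 30] put [x] in [D'] up to the wall [x.T_0 = 0], and
   then [x + eps Lam] lies in [D'].  Taking [sum c_a = 60] both on and off
   [I(T_0)] makes [x] orthogonal to [b] and [T_0], and fifteen such vectors are
   independent (certified by an explicit right inverse). *)

(* [inord] does not reduce under [vm_compute] (it goes through an opaque
   reflection lemma); this cast does, so finite facts about [J2] are decided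
   by evaluating them on [iota 0 16]. *)
Definition J2_of_nat (n : nat) : J2 := Ordinal (ltn_pmod n (isT : 0 < 16)%N).

Lemma J2_of_natK (a : J2) : J2_of_nat a = a.
Proof. by apply: val_inj; rewrite /= modn_small. Qed.

Lemma forall_ord n (P : pred nat) : all P (iota 0 n) -> forall i : 'I_n, P i.
Proof. by move/allP=> Pn i; apply: Pn; rewrite mem_iota ltn_ord. Qed.

Lemma forall_J2 (P : pred J2) :
  all (fun n => P (J2_of_nat n)) (iota 0 16) -> forall a, P a.
Proof. by move/forall_ord=> PJ2 a; rewrite -(J2_of_natK a). Qed.

Lemma card_J2 (P : pred J2) :
  #|[set a | P a]| = count (fun n => P (J2_of_nat n)) (iota 0 16).
Proof.
rewrite -sum1_card -sum1_count -[iota 0 16]/(index_iota 0 16) big_mkord.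
by apply: eq_bigl => a; rewrite inE J2_of_natK.
Qed.

Lemma sum_J2 (P : pred J2) (F : nat -> int) :
  \sum_(a | P a) F a = \sum_(0 <= n < 16 | P (J2_of_nat n)) F n.
Proof. by rewrite big_mkord; apply: eq_bigl => a; rewrite J2_of_natK. Qed.

Lemma card_Iset (be : J2) : #|Iset be| = 6%N.
Proof. by apply/eqP; rewrite card_J2; move: be; apply: forall_J2; vm_compute. Qed.

Lemma card_setC_Iset (be : J2) : #|~: Iset be| = 10%N.
Proof. by rewrite cardsCs setCK card_Iset card_ord. Qed.

Lemma mem_Iset0 (a : J2) : (a \in Iset ord0) = ((lab a).2 == 6%N).
Proof. by rewrite inE; apply/eqP; move: a; apply: forall_J2; vm_compute. Qed.

Lemma card_IsetI0 (be : J2) : be != ord0 -> #|Iset be :&: Iset ord0| = 2%N.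
Proof.
have -> : Iset be :&: Iset ord0 = [set a | inI be a && inI ord0 a].
  by apply/setP => a; rewrite !inE.
rewrite card_J2 => nz; apply/eqP; move: nz; apply/implyP; move: be.
by apply: forall_J2; vm_compute.
Qed.

Lemma card_IsetD0 (be : J2) : be != ord0 -> #|Iset be :\: Iset ord0| = 4%N.
Proof.
by move=> nz; have := cardsID (Iset ord0) (Iset be); rewrite card_IsetI0 // card_Iset; lia.
Qed.

Lemma sum_eq_natr (R : pzSemiRingType) (P : pred J2) (a : J2) :
  \sum_(c | P c) (c == a)%:R = (P a)%:R :> R.
Proof.
rewrite big_mkcond (bigD1 a) //= eqxx big1 ?addr0; first by case: (P a).
by move=> c /negbTE ->; rewrite if_same.
Qed.

Section Coordinates.
Variable R : realType.
Local Notation vec := (vec R).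
Local Notation form := (@Defs.form R).
Local Notation Lam := (Lam R).
Local Notation Nv := (Nv R).
Local Notation Tv := (Tv R).

Definition lamc (x : vec) : R := x 0 ord0.
Definition nodec (x : vec) (a : J2) : R := x 0 (lift ord0 a).

Lemma formE (x y : vec) :
  form x y = 4 * (lamc x * lamc y) - 2 * \sum_a nodec x a * nodec y a.
Proof. by []. Qed.

Lemma lamcD (x y : vec) : lamc (x + y) = lamc x + lamc y. Proof. by rewrite /lamc mxE. Qed.
Lemma lamcN (x : vec) : lamc (- x) = - lamc x. Proof. by rewrite /lamc mxE. Qed.
Lemma lamcZ c (x : vec) : lamc (c *: x) = c * lamc x. Proof. by rewrite /lamc mxE. Qed.
Lemma lamc_sum (I : finType) (P : pred I) (F : I -> vec) :
  lamc (\sum_(i | P i) F i) = \sum_(i | P i) lamc (F i).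
Proof. by rewrite /lamc summxE. Qed.
Lemma nodecD (x y : vec) b : nodec (x + y) b = nodec x b + nodec y b.
Proof. by rewrite /nodec mxE. Qed.
Lemma nodecN (x : vec) b : nodec (- x) b = - nodec x b.
Proof. by rewrite /nodec mxE. Qed.
Lemma nodecZ c (x : vec) b : nodec (c *: x) b = c * nodec x b.
Proof. by rewrite /nodec mxE. Qed.
Lemma nodec_sum (I : finType) (P : pred I) (F : I -> vec) b :
  nodec (\sum_(i | P i) F i) b = \sum_(i | P i) nodec (F i) b.
Proof. by rewrite /nodec summxE. Qed.

Lemma lamc_Lam : lamc Lam = 1. Proof. by rewrite /lamc mxE. Qed.
Lemma nodec_Lam b : nodec Lam b = 0. Proof. by rewrite /nodec mxE. Qed.
Lemma lamc_Nv a : lamc (Nv a) = 0. Proof. by rewrite /lamc mxE. Qed.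
Lemma nodec_Nv a b : nodec (Nv a) b = (b == a)%:R.
Proof. by rewrite /nodec mxE eqxx (inj_eq lift_inj). Qed.

Lemma lamc_sumNv (P : pred J2) : lamc (\sum_(a | P a) Nv a) = 0.
Proof. by rewrite lamc_sum big1 // => a _; rewrite lamc_Nv. Qed.

Lemma nodec_sumNv (P : pred J2) b : nodec (\sum_(a | P a) Nv a) b = (P b)%:R.
Proof.
by rewrite nodec_sum -(sum_eq_natr _ P b); apply: eq_bigr => a _; rewrite nodec_Nv eq_sym.
Qed.

Definition coordE :=
  (lamcD, lamcN, lamcZ, lamc_Lam, lamc_sumNv, nodecD, nodecN, nodecZ, nodec_Lam,
   nodec_sumNv, lamc_Nv, nodec_Nv).

Lemma form_of_coords (x r : vec) (al be ga : R) (S : pred J2) :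
  lamc r = al -> (forall b, nodec r b = be + ga * (S b)%:R) ->
  form x r = 4 * al * lamc x - 2 * be * \sum_b nodec x b
             - 2 * ga * \sum_(b | S b) nodec x b.
Proof.
move=> rl rn; rewrite formE rl.
under eq_bigr => b _ do rewrite rn mulrDr.
rewrite big_split /= -mulr_suml (big_mkcond S) /=.
have -> : \sum_b nodec x b * (ga * (S b)%:R) = ga * \sum_b (if S b then nodec x b else 0).
  by rewrite mulr_sumr; apply: eq_bigr => b _; case: (S b) => /=; ring.
ring.
Qed.

Lemma form_Lam x : form x Lam = 4 * lamc x.
Proof.
rewrite (@form_of_coords x _ 1 0 0 pred0 lamc_Lam); first ring.
by move=> b; rewrite nodec_Lam; ring.
Qed.

Lemma form_Nv x a : form x (Nv a) = - 2 * nodec x a.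
Proof.
rewrite (@form_of_coords x _ 0 0 1 (fun b => b == a) (lamc_Nv a)).
  by rewrite (big_pred1_eq _ a); ring.
by move=> b; rewrite nodec_Nv; ring.
Qed.

Lemma lamc_Tv be : lamc (Tv be) = 2^-1.
Proof. by rewrite /Defs.Tv !coordE; ring. Qed.

Lemma nodec_Tv be b : nodec (Tv be) b = - 2^-1 * (b \in Iset be)%:R.
Proof. by rewrite /Defs.Tv !coordE; ring. Qed.

Lemma form_Tv x be : form x (Tv be) = 2 * lamc x + \sum_(b in Iset be) nodec x b.
Proof.
rewrite (@form_of_coords x _ 2^-1 0 (- 2^-1) (fun b => b \in Iset be) (lamc_Tv be)).
  by field.
by move=> b; rewrite nodec_Tv; ring.
Qed.

Lemma form_LamN x a : form x (Lam - 2%:R *: Nv a) = 4 * lamc x + 4 * nodec x a.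
Proof.
rewrite (@form_of_coords x _ 1 0 (- 2) (fun b => b == a)).
- by rewrite (big_pred1_eq _ a); ring.
- by rewrite !coordE; ring.
- by move=> b; rewrite !coordE; ring.
Qed.

Lemma lamc_sigma y : lamc (sigma y) = 3 * lamc y + 2^-1 * \sum_a nodec y a.
Proof.
rewrite /sigma lamcD lamcZ lamc_sum mulr_sumr !coordE.
congr (_ + _); first by rewrite /lamc; ring.
by apply: eq_bigr => a _; rewrite lamcZ lamc_Tv mulrC.
Qed.

Lemma nodec_sigma y b :
  nodec (sigma y) b = - lamc y - 2^-1 * \sum_(a | b \in Iset a) nodec y a.
Proof.
rewrite /sigma nodecD nodecZ nodec_sum !coordE /=.
rewrite (big_mkcond (fun a => b \in Iset a)) mulr_sumr -sumrN.
congr (_ + _); first by rewrite /lamc; ring.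
by apply: eq_bigr => a _; rewrite nodecZ nodec_Tv /nodec; case: (b \in Iset a) => /=; ring.
Qed.

Lemma lamc_LamN a : lamc (Lam - 2%:R *: Nv a) = 1.
Proof. by rewrite !coordE; ring. Qed.

Lemma nodec_LamN a c : nodec (Lam - 2%:R *: Nv a) c = - 2 * (c == a)%:R.
Proof. by rewrite !coordE; ring. Qed.

Lemma form_sigma_LamN x a :
  form x (sigma (Lam - 2%:R *: Nv a)) = 8 * lamc x + 2 * \sum_(b in ~: Iset a) nodec x b.
Proof.
have sum_LamN (P : pred J2) : \sum_(c | P c) nodec (Lam - 2%:R *: Nv a) c = - 2 * (P a)%:R.
  by under eq_bigr => c _ do rewrite nodec_LamN; rewrite -mulr_sumr sum_eq_natr.
rewrite (@form_of_coords x _ 2 0 (- 1) (fun b => b \in ~: Iset a)); first ring.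
  by rewrite lamc_sigma lamc_LamN sum_LamN /=; field.
move=> b; rewrite nodec_sigma lamc_LamN sum_LamN in_setC.
by case: (b \in Iset a) => /=; field.
Qed.

Lemma form_r_g x g : form x (r_g R g) = 4 * lamc x + 2 * \sum_(b in g) nodec x b.
Proof.
rewrite (@form_of_coords x _ 1 0 (- 1) (fun b => b \in g)); first ring.
  by rewrite /r_g !coordE; ring.
by move=> b; rewrite /r_g !coordE; ring.
Qed.

Lemma form_r_w x w : form x (r_w R w) = 12 * lamc x + 4 * \sum_(b in w) nodec x b.
Proof.
rewrite (@form_of_coords x _ 3 0 (- 2) (fun b => b \in w)); first ring.
  by rewrite /r_w !coordE; ring.
by move=> b; rewrite /r_w !coordE; ring.
Qed.

Lemma lamc_bv : lamc (bv R) = 3 / 2.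
Proof. by rewrite /bv !coordE; field. Qed.

Lemma nodec_bv b : nodec (bv R) b = - 1 + 2^-1 * (b \in Iset ord0)%:R.
Proof. by rewrite /bv !coordE mem_Iset0; case: ((lab b).2 == 6%N) => /=; field. Qed.

Lemma form_bv x : form x (bv R) =
  6 * lamc x + \sum_(b in Iset ord0) nodec x b + 2 * \sum_(b in ~: Iset ord0) nodec x b.
Proof.
rewrite (@form_of_coords x _ (3 / 2) (- 1) 2^-1 (fun b => b \in Iset ord0) lamc_bv nodec_bv).
have -> : \sum_b nodec x b =
    \sum_(b in Iset ord0) nodec x b + \sum_(b in ~: Iset ord0) nodec x b.
  rewrite (bigID (mem (Iset ord0))) /=; congr (_ + _).
  by apply: eq_bigl => b; rewrite in_setC.
by field.
Qed.

End Coordinates.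

Section Bounds.
Variables (R : realType) (x : vec R) (h k : R).
Local Notation form := (@Defs.form R).

Hypothesis nodec_lt0 : forall a, nodec x a < 0.
Hypothesis nodec_ge : forall a, - h <= nodec x a.
Hypothesis nodec_ge_off : forall a, a \notin Iset ord0 -> - k <= nodec x a.
Hypothesis lamc_gt5h : 5 * h < 2 * lamc x.
Hypothesis lamc_gt_h2k : h + 2 * k < lamc x.
Hypothesis lamc_sq_gt : 3 * h ^+ 2 + 5 * k ^+ 2 < lamc x ^+ 2.

Fact lamc_gt0 : 0 < lamc x.
Proof. by have := nodec_ge ord0; have := nodec_lt0 ord0; have := lamc_gt5h; lra. Qed.

Lemma sum_nodec_ge (A : {set J2}) : - h * #|A|%:R <= \sum_(a in A) nodec x a.
Proof. by rewrite mulr_natr -sumr_const; apply: ler_sum => a _; apply: nodec_ge. Qed.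

Lemma sum_nodec_ge_off (A : {set J2}) :
  - k * #|A :\: Iset ord0|%:R <= \sum_(a in A :\: Iset ord0) nodec x a.
Proof.
rewrite mulr_natr -sumr_const; apply: ler_sum => a.
by rewrite inE => /andP[off _]; apply: nodec_ge_off.
Qed.

Lemma sum_sqr_nodec_le : \sum_a nodec x a ^+ 2 <= 6 * h ^+ 2 + 10 * k ^+ 2.
Proof.
have sqr_le a c : - c <= nodec x a -> nodec x a ^+ 2 <= c ^+ 2.
  by have := nodec_lt0 a; rewrite !expr2 => *; nra.
rewrite (bigID (mem (Iset ord0))) /=; apply: lerD.
  apply: (@le_trans _ _ (\sum_(a in Iset ord0) h ^+ 2)).
    by apply: ler_sum => a _; apply/sqr_le/nodec_ge.
  by rewrite sumr_const card_Iset mulr_natl.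
rewrite (eq_bigl (mem (~: Iset ord0))) => [|a]; last by rewrite /= in_setC.
apply: (@le_trans _ _ (\sum_(a in ~: Iset ord0) k ^+ 2)).
  by apply: ler_sum => a off; apply/sqr_le/nodec_ge_off; rewrite -in_setC.
by rewrite sumr_const card_setC_Iset mulr_natl.
Qed.

Lemma sum_Iset_ge be : be != ord0 -> - 2 * h - 4 * k <= \sum_(a in Iset be) nodec x a.
Proof.
move=> nz; rewrite (big_setID (Iset ord0)) /=.
apply: le_trans (lerD (sum_nodec_ge _) (sum_nodec_ge_off _)).
by rewrite card_IsetI0 // card_IsetD0 //; lra.
Qed.

Lemma Pcone_of_bounds : Pcone x.
Proof.
have t_gt0 := lamc_gt0; have := sum_sqr_nodec_le.
split; last by rewrite form_Lam; lra.
rewrite formE; under eq_bigr => a _ do rewrite -expr2.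
move: lamc_sq_gt; rewrite !expr2; lra.
Qed.

Hypothesis form_Rv_gt0 : 0 < form x (Rv R).

Lemma form_Tv_gt0 be : 0 < form x (Tv R be).
Proof.
have [->|nz] := eqVneq be ord0; first exact: form_Rv_gt0.
by rewrite form_Tv; have := sum_Iset_ge nz; have := lamc_gt_h2k; lra.
Qed.

Lemma form_root_gt0 r : root_vec r -> 0 < form x r.
Proof.
have t_gt0 := lamc_gt0; have t_gt := lamc_gt5h.
case=> [[a ->]|[[be ->]|[[a ->]|[[a ->]|[[g [gopel_g ->]]|[w [weber_w ->]]]]]]].
- by rewrite form_Nv; have := nodec_lt0 a; lra.
- exact: form_Tv_gt0.
- by rewrite form_LamN; have := nodec_ge a; lra.
- by rewrite form_sigma_LamN; have := sum_nodec_ge (~: Iset a); rewrite card_setC_Iset; lra.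
- rewrite form_r_g; have := sum_nodec_ge g.
  by case/andP: gopel_g => /eqP -> _; lra.
- rewrite form_r_w; have := sum_nodec_ge w.
  by case/and3P: weber_w => /eqP -> _ _; lra.
Qed.

Lemma Dprime_of_bounds : Dprime x.
Proof. by split; [exact: Pcone_of_bounds | exact: form_root_gt0]. Qed.

End Bounds.

Lemma closure_of_bounds (R : realType) (x : vec R) (h k : R) :
  (forall a, nodec x a < 0) -> (forall a, - h <= nodec x a) ->
  (forall a, a \notin Iset ord0 -> - k <= nodec x a) ->
  5 * h < 2 * lamc x -> h + 2 * k < lamc x -> 3 * h ^+ 2 + 5 * k ^+ 2 < lamc x ^+ 2 ->
  0 <= Defs.form x (Rv R) -> closure17 (@Dprime R) x.
Proof.
move=> lt0 ge ge_off t5h th2k tsq Rv_ge0 e e_gt0.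
(* [x + s Lam] satisfies the strict bounds and is [s]-close to [x]. *)
have t_gt0 : 0 < lamc x by have := ge ord0; have := lt0 ord0; lra.
pose s := e / 2; have s_gt0 : 0 < s by rewrite /s; lra.
pose y := x + s *: Lam R.
have lamc_y : lamc y = lamc x + s by rewrite !coordE mulr1.
have nodec_y a : nodec y a = nodec x a by rewrite !coordE mulr0 addr0.
exists y; split.
  apply: (@Dprime_of_bounds R y h k) => [a|a|a||||]; rewrite ?nodec_y ?lamc_y //.
  - exact: ge_off.
  - lra.
  - lra.
  - by move: tsq; rewrite !expr2; nra.
  - move: Rv_ge0; rewrite /Rv !form_Tv lamc_y (eq_bigr _ (fun a _ => nodec_y a)).
    lra.
move=> j; rewrite !mxE; case: (j == ord0); rewrite /= ?mulr1 ?mulr0 ?addr0.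
  by rewrite opprD addrA subrr sub0r normrN gtr0_norm // /s; lra.
by rewrite subrr normr0.
Qed.

Section Rank.
Variable R : realType.
Local Notation form := (@Defs.form R).

Definition form_weights : 'rV[R]_17 := \row_k (if k == ord0 then 4 else - 2).

Lemma form_weightsE (x y : vec R) :
  form x y = \sum_k x 0 k * form_weights 0 k * y 0 k.
Proof.
rewrite big_ord_recl formE /lamc /nodec !mxE eqxx mulr_sumr -sumrN.
congr (_ + _); first by rewrite mulrA [_ * 4]mulrC.
by apply: eq_bigr => a _; rewrite mxE /=; ring.
Qed.

Lemma form_weights_mx m n (M : 'M[R]_(m, 17)) (U : 'M[R]_(n, 17)) :
  M *m diag_mx form_weights *m U^T = \matrix_(i, j) form (row i M) (row j U).
Proof.
apply/matrixP => i j; rewrite !mxE form_weightsE.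
by apply: eq_bigr => k _; rewrite mul_mx_diag !mxE.
Qed.

Lemma unitmx_form_weights : diag_mx form_weights \in unitmx.
Proof.
rewrite unitmxE det_diag unitfE prodf_seq_neq0; apply/allP => k _.
by rewrite mxE; case: (k == ord0); rewrite ?oppr_eq0 pnatr_eq0.
Qed.

Lemma rank_form_orthogonal m n (M : 'M[R]_(m, 17)) (U : 'M[R]_(n, 17)) :
  (forall i j, form (row i M) (row j U) = 0) -> (\rank M + \rank U <= 17)%N.
Proof.
move=> orthMU.
have MWU0 : M *m (diag_mx form_weights *m U^T) = 0.
  by rewrite mulmxA form_weights_mx; apply/matrixP => i j; rewrite !mxE orthMU.
have := mulmx0_rank_max MWU0.
by rewrite eqmxMfull ?mxrank_tr // row_full_unit unitmx_form_weights.
Qed.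

Definition bR_mx : 'M[R]_(2, 17) := \matrix_(i < 2) (if i == 0 then bv R else Rv R).

(* A right inverse of [bR_mx], read off its coordinates at [Lam] and at [N_12]. *)
Definition bR_rinv : 'M[R]_(17, 2) :=
  \matrix_(k, j) (if k == ord0 then (if j == 0 then 0 else 2)
                  else if k == lift ord0 (J2_of_nat 1) then (if j == 0 then - 1 else 3)
                  else 0).

Lemma rank_bR_mx : \rank bR_mx = 2%N.
Proof.
apply/eqP; rewrite eqn_leq rank_leq_row /=.
apply: (@mulmx1_min_rank _ 2 2 17 bR_mx 1%:M bR_rinv).
rewrite mul1mx; apply/matrixP => i j.
rewrite !mxE (bigD1 ord0) // (bigD1 (lift ord0 (J2_of_nat 1))) //= big1;
  last by move=> k /andP[nk1 nk0]; rewrite !mxE (negbTE nk1) (negbTE nk0) mulr0.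
rewrite !mxE !eqxx /= addr0.
have bv0 : bv R 0 ord0 = 3 / 2 := lamc_bv R.
have off1 : (J2_of_nat 1 \in Iset ord0) = false by rewrite inE.
have bv1 : bv R 0 (lift ord0 (J2_of_nat 1)) = - 1.
  by rewrite [LHS]nodec_bv off1 mulr0 addr0.
have Rv0 : Rv R 0 ord0 = 2^-1 := lamc_Tv R ord0.
have Rv1 : Rv R 0 (lift ord0 (J2_of_nat 1)) = 0.
  by rewrite [LHS]nodec_Tv off1 mulr0.
by case: i => -[|[|//]] ?; case: j => -[|[|//]] ? /=;
  rewrite ?bv0 ?bv1 ?Rv0 ?Rv1; field.
Qed.

Lemma rank_le_AR m (M : 'M[R]_(m, 17)) : (forall i, AR (row i M)) -> (\rank M <= 15)%N.
Proof.
move=> AR_M; have orth i j : form (row i M) (row j bR_mx) = 0.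
  by rewrite rowK; case: (AR_M i) => bv0 Rv0; case: (j == 0).
by have := rank_form_orthogonal orth; rewrite rank_bR_mx; lia.
Qed.

End Rank.

Definition I0_nodes : seq nat := [seq n <- iota 0 16 | inI ord0 (J2_of_nat n)].
Definition off_nodes : seq nat := [seq n <- iota 0 16 | ~~ inI ord0 (J2_of_nat n)].

(* Row [i] of the witness is [30 Lam - sum_a c_a N_a] with [c_a = 10] on
   [I(T_0)] and [c_a = 6] off it, perturbed by moving one unit of [c] from the
   node [moved i] to the node [anchor i] on the same side of [I(T_0)]; row [0]
   is unperturbed. *)
Definition anchor (i : nat) : nat :=
  if (i <= 5)%N then head 0%N I0_nodes else head 0%N off_nodes.
Definition moved (i : nat) : nat :=
  if (i <= 5)%N then nth 0%N I0_nodes i else nth 0%N off_nodes (i - 5).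

Definition witness_coef (i a : nat) : int :=
  (if inI ord0 (J2_of_nat a) then 10 else 6) + (a == anchor i)%:R - (a == moved i)%:R.

Definition witness_entry (i k : nat) : int :=
  if k == 0%N then 30 else - witness_coef i k.-1.

(* [30] times a right inverse of the witness matrix. *)
Definition witness_certificate (k j : nat) : int :=
  if j == 0%N then
    if k == 0%N then - 103 else if k.-1 \in [:: anchor 0; anchor 6] then 0 else - 30
  else if k == 0%N then (if (j <= 5)%N then 10 else 6)
  else if k == (moved j).+1 then 30 else 0.

Lemma witness_coef_bounds :
  all (fun i => all (fun a =>
    [&& 0 < witness_coef i a, witness_coef i a <= 11
      & inI ord0 (J2_of_nat a) || (witness_coef i a <= 7)]) (iota 0 16)) (iota 0 15).
Proof. by vm_compute. Qed.

Lemma witness_coef_sums :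
  all (fun i =>
    (\sum_(0 <= a < 16 | inI ord0 (J2_of_nat a)) witness_coef i a == 60) &&
    (\sum_(0 <= a < 16 | ~~ inI ord0 (J2_of_nat a)) witness_coef i a == 60))
  (iota 0 15).
Proof. by rewrite unlock; vm_compute. Qed.

Lemma witness_certificateP :
  all (fun i => all (fun j =>
    \sum_(0 <= k < 17) witness_entry i k * witness_certificate k j == (i == j)%:R * 30)
  (iota 0 15)) (iota 0 15).
Proof. by rewrite unlock; vm_compute. Qed.

Section Witness.
Variable R : realType.

Definition witness : 'M[R]_(15, 17) := \matrix_(i, k) (witness_entry i k)%:~R.
Definition witness_rinv : 'M[R]_(17, 15) :=
  \matrix_(k, j) ((witness_certificate k j)%:~R / 30).

Lemma lamc_witness i : lamc (row i witness) = 30.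
Proof. by rewrite /lamc !mxE. Qed.

Lemma nodec_witness i a : nodec (row i witness) a = - (witness_coef i a)%:~R.
Proof. by rewrite /nodec !mxE /witness_entry /= intrN. Qed.

Lemma sum_nodec_witness i (P : pred J2) :
  \sum_(a | P a) nodec (row i witness) a =
  - (\sum_(0 <= n < 16 | P (J2_of_nat n)) witness_coef i n)%:~R.
Proof.
rewrite -sum_J2 rmorph_sum -sumrN.
by apply: eq_bigr => a _; rewrite nodec_witness.
Qed.

Lemma sum_witness_I0 i : \sum_(a in Iset ord0) nodec (row i witness) a = - 60.
Proof.
rewrite sum_nodec_witness (eq_bigl (fun n => inI ord0 (J2_of_nat n))) => [|n];
  last by rewrite inE.
by have /andP[/eqP -> _] := forall_ord witness_coef_sums i.
Qed.

Lemma sum_witness_off i : \sum_(a in ~: Iset ord0) nodec (row i witness) a = - 60.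
Proof.
rewrite sum_nodec_witness (eq_bigl (fun n => ~~ inI ord0 (J2_of_nat n))) => [|n];
  last by rewrite !inE.
by have /andP[_ /eqP ->] := forall_ord witness_coef_sums i.
Qed.

Lemma witness_row_AR i : AR (row i witness).
Proof.
split; first by rewrite form_bv lamc_witness sum_witness_I0 sum_witness_off; ring.
by rewrite /Rv form_Tv lamc_witness sum_witness_I0; ring.
Qed.

Lemma witness_row_Omega i : Omega (row i witness).
Proof.
split; last exact: witness_row_AR.
have bounds (a : J2) : [&& 0 < witness_coef i a, witness_coef i a <= 11
                         & (a \in Iset ord0) || (witness_coef i a <= 7)].
  by have := forall_ord (forall_ord witness_coef_bounds i) a; rewrite J2_of_natK inE.
apply: (@closure_of_bounds R _ 11 7); rewrite ?lamc_witness.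
- by move=> a; rewrite nodec_witness oppr_lt0 ltr0z; case/and3P: (bounds a).
- move=> a; rewrite nodec_witness lerN2.
  by case/and3P: (bounds a) => _; rewrite -(ler_int R).
- move=> a off; rewrite nodec_witness lerN2.
  by case/and3P: (bounds a) => _ _; rewrite (negbTE off) -(ler_int R).
- lra.
- lra.
- lra.
by case: (witness_row_AR i) => _ ->.
Qed.

Lemma witness_rinvP : witness *m witness_rinv = 1%:M.
Proof.
apply/matrixP => i j; rewrite !mxE.
rewrite (eq_bigr (fun k : 'I_17 => (witness_entry i k * witness_certificate k j)%:~R / 30));
  last by move=> k _; rewrite !mxE intrM mulrA.
rewrite -mulr_suml -rmorph_sum.
have := forall_ord (forall_ord witness_certificateP i) j; rewrite big_mkord => /eqP ->.
rewrite -[(i : nat) == j]/(i == j); case: (i == j).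
  by rewrite mul1r divff // intr_eq0.
by rewrite (mul0r (30 : int)) mul0r.
Qed.

Lemma rank_witness : \rank witness = 15%N.
Proof.
apply/eqP; rewrite eqn_leq rank_leq_row /=.
apply: (@mulmx1_min_rank _ 15 15 17 witness 1%:M witness_rinv).
by rewrite mul1mx witness_rinvP.
Qed.
End Witness.

Theorem proposition4p2 (R : realType) :
  span_dim (@Omega R) 15 /\ span_dim (@AR R) 15.
Proof.
have rank_le_Omega n (M : 'M[R]_(n, 17)) : (forall i, Omega (row i M)) -> (\rank M <= 15)%N.
  by move=> OmegaM; apply: rank_le_AR => i; case: (OmegaM i).
split; split.
- by exists (witness R); split; [exact: witness_row_Omega | exact: rank_witness].
- exact: rank_le_Omega.
- by exists (witness R); split; [exact: witness_row_AR | exact: rank_witness].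
- exact: rank_le_AR.
Qed.
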